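(* Assume $\mathfrak{d}=\omega_1$, and let $\langle f_\alpha:\alpha<\omega_1\rangle$ be functions in ${}^\omega\omega$ with $f_\alpha<^*f_\beta$ whenever $\alpha<\beta$ and such that every $g\in{}^\omega\omega$ satisfies $g<^*f_\alpha$ for some $\alpha$. Let $\{P_i:i<\omega\}$ be a partition of $\omega$ into infinite sets, $Z_\alpha=\{n:\exists i\,(n\in P_i\text{ and }n>f_\alpha(i))\}$, and let $X$ be the space on $(\omega\times\omega_1)\cup\{\infty\}$ with points of $\omega\times\omega_1$ isolated and a local subbase at $\infty$ consisting of the sets $X\setminus(P_i\times\omega_1)$ ($i<\omega$) and $X\setminus(Z_\alpha\times\alpha)$ ($\alpha<\omega_1$). Then $X$ is not $\mathbb{Q}$-selective.
   Context: $f<^*g$ means $f(n)<g(n)$ for all but finitely many $n$. $\mathcal{F}(X)$ is the set of nonempty closed subsets of $X$; $\varphi:Y\rightarrow\mathcal{F}(X)$ is lower semicontinuous if for every open $W\subseteq X$, $\{y:\varphi(y)\cap W\neq\emptyset\}$ is open in $Y$. $X$ is $Y$-selective if every lower semicontinuous $\varphi:Y\rightarrow\mathcal{F}(X)$ has a continuous selection $s:Y\rightarrow X$ with $s(y)\in\varphi(y)$ for all $y$. $\mathbb{Q}$ denotes the rationals with the usual topology. *)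

From HB Require Import structures.
From mathcomp Require Import all_boot all_order all_algebra.
From Stdlib Require Import List.
Set Implicit Arguments. Unset Strict Implicit. Unset Printing Implicit Defensive.
Import Order.TTheory GRing.Theory Num.Theory.

Definition is_closed {T : Type} (opn : (T -> Prop) -> Prop) (F : T -> Prop) :=
  opn (fun x => ~ F x).

Definition is_continuous {Y X : Type} (openY : (Y -> Prop) -> Prop)
  (openX : (X -> Prop) -> Prop) (s : Y -> X) :=
  forall U, openX U -> openY (fun y => U (s y)).

Definition lower_semicontinuous {Y X : Type} (openY : (Y -> Prop) -> Prop)
  (openX : (X -> Prop) -> Prop) (phi : Y -> X -> Prop) :=
  forall W, openX W -> openY (fun y => exists x, phi y x /\ W x).

Definition selective {Y X : Type} (openY : (Y -> Prop) -> Prop)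
  (openX : (X -> Prop) -> Prop) :=
  forall phi : Y -> X -> Prop,
    (forall y, (exists x, phi y x) /\ is_closed openX (phi y)) ->
    lower_semicontinuous openY openX phi ->
    exists s : Y -> X, is_continuous openY openX s /\ forall y, phi y (s y).

Local Open Scope ring_scope.
Definition Qopen (U : rat -> Prop) : Prop :=
  forall q, U q -> exists e : rat, 0 < e /\ forall r : rat, `|r - q| < e -> U r.
Local Close Scope ring_scope.

Definition is_omega1 (W : Type) (lt : W -> W -> Prop) : Prop :=
  (forall a, ~ lt a a) /\
  (forall a b c, lt a b -> lt b c -> lt a c) /\
  (forall a b, lt a b \/ a = b \/ lt b a) /\
  well_founded lt /\
  ~ (exists g : W -> nat, forall a b, g a = g b -> a = b) /\
  (forall a, exists g : W -> nat,
       forall b c, lt b a -> lt c a -> g b = g c -> b = c).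

Definition lt_star (f g : nat -> nat) : Prop :=
  exists N, forall n, (N <= n)%N -> (f n < g n)%N.

(* {P i : i < omega} is a partition of omega into infinite sets;
   P i n means n \in P_i. *)
Definition partition_infinite (P : nat -> nat -> Prop) : Prop :=
  (forall n, exists i, P i n) /\
  (forall n i j, P i n -> P j n -> i = j) /\
  (forall i m, exists n, (m <= n)%N /\ P i n).

Definition Zset (P : nat -> nat -> Prop) (fa : nat -> nat) (n : nat) : Prop :=
  exists i, P i n /\ (fa i < n)%N.

(* The space X on (omega x omega_1) u {infty}; None is infty. *)
Definition Xpt (W : Type) := option (nat * W).

Definition subP {W : Type} (P : nat -> nat -> Prop) (i : nat) (x : Xpt W) : Prop :=
  match x with None => True | Some (n, _) => ~ P i n end.

Definition subZ {W : Type} (lt : W -> W -> Prop) (P : nat -> nat -> Prop)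
  (f : W -> nat -> nat) (a : W) (x : Xpt W) : Prop :=
  match x with None => True | Some (n, b) => ~ (Zset P (f a) n /\ lt b a) end.

(* Open sets of X: points of omega x omega_1 are isolated, and a set containing
   infty is open iff it contains a finite intersection of subbasic sets. *)
Definition Xopen {W : Type} (lt : W -> W -> Prop) (P : nat -> nat -> Prop)
  (f : W -> nat -> nat) (U : Xpt W -> Prop) : Prop :=
  U None ->
  exists (I : list nat) (A : list W),
    forall x, (forall i, In i I -> subP P i x) ->
              (forall a, In a A -> subZ lt P f a x) -> U x.

(* Put c_j = 1/((j+1) sqrt 2).  For rational r <> 0 let level r be the least j
   with |r| > c_j, and depth r the least k with |r| > c_(level r) (k+2)/(k+1).
   Since sqrt 2 is irrational both are locally constant on Q \ {0}; level r
   tends to infinity as r -> 0, and depth is unbounded just to the right of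
   each c_m: if p^2 = 2 q^2 + 1 then r = p / (2 q (m+1)) exceeds c_m by a factor
   sqrt(1 + 1/(2 q^2)), so level r = m and depth r >= q.
   Let phi(0) = {oo} and phi(r) = (P_(level r) minus [0, depth r]) x omega_1.
   It has closed nonempty values and is lower semicontinuous: at 0 because the
   large levels avoid any finitely many P_i, and the second coordinate can be
   chosen above any finitely many alpha.  A continuous selection s must have
   s(0) = oo, and its countably many values s(r), r <> 0, lie in omega x rho
   for some rho < omega_1.  Continuity at 0 for the neighbourhood
   X \ (Z_rho x rho) fails at any r near 0 with depth r >= f_rho(level r):
   there s(r) = (n, beta) with n in P_(level r), n > f_rho(level r), beta < rho. *)

From HB Require Import structures.
From mathcomp Require Import all_boot all_order all_algebra.
From mathcomp Require Import zify ring lra.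
From Stdlib Require Import List Classical ClassicalEpsilon.
Set Implicit Arguments. Unset Strict Implicit. Unset Printing Implicit Defensive.
Import Order.TTheory GRing.Theory Num.Theory.

Local Open Scope ring_scope.

Lemma sqr_rat_neq2 (x : rat) : x ^+ 2 != 2.
Proof.
apply/eqP => x2.
have sq_eq : (numq x ^+ 2)%:~R = (2 * denq x ^+ 2)%:~R :> rat.
  rewrite -{1}(divq_num_den x) in x2.
  rewrite rmorphXn rmorphM rmorphXn /= -[X in _ = X * _]x2.
  by field; rewrite intr_eq0 gt_eqF ?denq_gt0.
move/intr_inj/(congr1 absz): sq_eq; rewrite abszX abszM abszX /= => sq_eqn.
have den_gt0 : (0 < `|denq x|)%N by rewrite absz_gt0 gt_eqF ?denq_gt0.
have := congr1 (logn 2) sq_eqn.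
rewrite !lognX lognM ?expn_gt0 ?den_gt0 // lognX (@logn_prime 2 2 isT) /=.
lia.
Qed.

Definition near (q : rat) (A : rat -> Prop) :=
  exists e : rat, 0 < e /\ forall r : rat, `|r - q| < e -> A r.

Lemma near_mono (q : rat) (A B : rat -> Prop) :
  near q A -> (forall r, A r -> B r) -> near q B.
Proof. by move=> [e [e_gt0 Ae]] AB; exists e; split=> // r /Ae/AB. Qed.

Lemma nearI (q : rat) (A B : rat -> Prop) :
  near q A -> near q B -> near q (fun r => A r /\ B r).
Proof.
move=> [e [e_gt0 Ae]] [d [d_gt0 Bd]]; exists (Num.min e d).
split=> [|r]; first by rewrite lt_min e_gt0.
by rewrite lt_min => /andP[/Ae ? /Bd ?].
Qed.

Lemma near_forall_leq (q : rat) (n : nat) (A : nat -> rat -> Prop) :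
  (forall k, near q (A k)) -> near q (fun r => forall k, (k <= n)%N -> A k r).
Proof.
move=> nearA; elim: n => [|n IHn].
  by apply: (near_mono (nearA 0%N)) => r A0r [|k].
apply: (near_mono (nearI IHn (nearA n.+1))) => r [Ar An1r] k.
by rewrite leq_eqVlt ltnS => /orP[/eqP->|/Ar].
Qed.

Lemma near_neq0 (q : rat) : q != 0 -> near q (fun r => r != 0).
Proof.
move=> q_neq0; exists `|q|; split=> [|r]; first by rewrite normr_gt0.
by apply: contraTneq => ->; rewrite sub0r normrN ltxx.
Qed.

Lemma near_scale (c q : rat) (A : rat -> Prop) :
  near (c * q) A -> near q (fun r => A (c * r)).
Proof.
move=> [e [e_gt0 Ae]]; exists (e / (`|c| + 1)).
have c1_gt0 : 0 < `|c| + 1 by rewrite ltr_wpDl.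
split=> [|r]; first by rewrite divr_gt0.
rewrite ltr_pdivlMr // => lt_rq; apply: Ae.
rewrite -mulrBr normrM (le_lt_trans _ lt_rq) // mulrC ler_wpM2l //.
by rewrite lerDl.
Qed.

Lemma near_sqr (x d : rat) : 0 < d -> near x (fun y => `|y ^+ 2 - x ^+ 2| < d).
Proof.
move=> d_gt0; pose B := 2 * `|x| + 1.
have B_gt0 : 0 < B by rewrite ltr_wpDl ?mulr_ge0.
exists (Num.min 1 (d / B)); split=> [|y]; first by rewrite lt_min ltr01 divr_gt0.
rewrite lt_min => /andP[lt_yx1 lt_yxd].
have le_sum : `|y + x| <= `|y - x| + 2 * `|x|.
  have -> : y + x = (y - x) + 2 * x by ring.
  by rewrite (le_trans (ler_normD _ _)) // normrM ger0_norm.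
have -> : y ^+ 2 - x ^+ 2 = (y - x) * (y + x) by ring.
move: lt_yxd; rewrite ltr_pdivlMr // normrM /B => lt_yxd.
have := normr_ge0 (y - x); have := normr_ge0 x; nra.
Qed.

(* [above x] says |x| > 1/sqrt 2; as sqrt 2 is irrational, no rational x lies
   on the boundary, which makes [above] locally constant. *)
Definition above (x : rat) : bool := 1 < 2 * x ^+ 2.

Lemma near_above (x : rat) : near x (fun y => above y = above x).
Proof.
have x2_neq : 2 * x ^+ 2 != 1.
  apply: contra (sqr_rat_neq2 (2 * x)) => /eqP x2; apply/eqP.
  by rewrite exprMn -[2 ^+ 2]/(2 * 2) -mulrA x2 mulr1.
have d_gt0 : 0 < `|2 * x ^+ 2 - 1| / 2 by rewrite divr_gt0 // normr_gt0 subr_eq0.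
apply: (near_mono (near_sqr x d_gt0)) => y.
rewrite /above ltr_norml => /andP[lo hi].
have [x2_lt|x2_gt|/eqP] := ltrgtP (2 * x ^+ 2) 1; last by rewrite (negbTE x2_neq).
- move: lo hi; rewrite ltr0_norm ?subr_lt0 // => lo hi.
  by apply/negbTE; rewrite -leNgt; lra.
- move: lo hi; rewrite gtr0_norm ?subr_gt0 // => lo hi.
  by apply/idP; lra.
Qed.

Section FirstAbove.

Variable c : rat -> nat -> rat.
Hypothesis c_above : forall r, r != 0 -> exists k, above (c r k * r).

Lemma first_above_ex (r : rat) : exists k, (r == 0) || above (c r k * r).
Proof.
have [->|r_neq0] := eqVneq r 0; first by exists 0%N.
by have [k ck] := c_above r_neq0; exists k; rewrite ck orbT.
Qed.

Definition first_above (r : rat) : nat := ex_minn (first_above_ex r).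

Lemma first_aboveP (r : rat) : r != 0 -> above (c r (first_above r) * r).
Proof.
by move=> r_neq0; rewrite /first_above; case: ex_minnP => k; rewrite (negbTE r_neq0).
Qed.

Lemma first_above_le (r : rat) (k : nat) :
  above (c r k * r) -> (first_above r <= k)%N.
Proof.
by move=> ck; rewrite /first_above; case: ex_minnP => m _; apply; rewrite ck orbT.
Qed.

Lemma first_above_ge (r : rat) (k : nat) :
  r != 0 -> (forall j, (j < k)%N -> ~~ above (c r j * r)) -> (k <= first_above r)%N.
Proof.
move=> r_neq0 below; rewrite leqNgt; apply/negP => /below.
by rewrite first_aboveP.
Qed.

Lemma near_first_above (q : rat) :
  q != 0 -> (forall k, near q (fun r => c r k = c q k)) ->
  near q (fun r => first_above r = first_above q).
Proof.
move=> q_neq0 near_c; pose m := first_above q.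
have near_test k : near q (fun r => r != 0 /\ above (c r k * r) = above (c q k * q)).
  apply: (near_mono (nearI (near_neq0 q_neq0) (nearI (near_c k)
    (near_scale (near_above (c q k * q)))))) => r [r_neq0 [-> ->]].
  by split.
apply: (near_mono (near_forall_leq m near_test)) => r same_test.
have [r_neq0 test_m] := same_test m (leqnn m).
apply/eqP; rewrite eqn_leq first_above_le ?test_m ?first_aboveP //=.
rewrite leqNgt; apply/negP => lt_rq.
have [_ test_r] := same_test _ (ltnW lt_rq).
move: lt_rq; rewrite ltnNge first_above_le // -test_r first_aboveP //.
Qed.

End FirstAbove.

Lemma above_normE (x : rat) : above x = (1 < 2 * `|x| ^+ 2).
Proof. by rewrite /above real_normK ?num_real. Qed.

Lemma above_ratio (a b : nat) :
  (0 < b)%N -> above (a%:R / b%:R) = (b * b < 2 * (a * a))%N.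
Proof.
move=> b_gt0; rewrite /above expr_div_n mulrA ltr_pdivlMr ?exprn_gt0 ?ltr0n //.
by rewrite mul1r -!natrX -natrM ltr_nat !expnS !expn0 !muln1.
Qed.

Lemma exists_nat_gt (x : rat) : exists n : nat, x < n%:R.
Proof.
exists (Num.bound `|x|).
exact: le_lt_trans (ler_norm x) (archi_boundP (normr_ge0 x)).
Qed.

Lemma level_above (r : rat) : r != 0 -> exists j : nat, above (j.+1%:R * r).
Proof.
move=> r_neq0; have r_gt0 : 0 < `|r| by rewrite normr_gt0.
have [j] := exists_nat_gt `|r|^-1.
rewrite -[_^-1]div1r ltr_pdivrMr // => j_big.
exists j; rewrite above_normE normrM ger0_norm // -natr1; nra.
Qed.

Definition level : rat -> nat := first_above level_above.

Definition depth_coef (n k : nat) : rat := n.+1%:R * (k.+1%:R / k.+2%:R).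

Lemma depth_above (r : rat) :
  r != 0 -> exists k : nat, above (depth_coef (level r) k * r).
Proof.
move=> r_neq0; have := first_aboveP level_above r_neq0.
rewrite /above /depth_coef -/(level r); set a := 2 * _ => a_gt1.
have [k k_big] := exists_nat_gt (3 / (a - 1)).
exists k; have -> : 2 * ((level r).+1%:R * (k.+1%:R / k.+2%:R) * r) ^+ 2
                  = a * k.+1%:R ^+ 2 / k.+2%:R ^+ 2.
  by rewrite /a; field; apply: lt0r_neq0; have := ler0n rat k; lra.
rewrite ltr_pdivlMr ?exprn_gt0 ?ltr0n // mul1r.
move: k_big; rewrite ltr_pdivrMr ?subr_gt0 // -!natr1 => k_big.
have := ler0n rat k; nra.
Qed.

Definition depth : rat -> nat := first_above depth_above.

Lemma near_level_depth (q : rat) :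
  q != 0 -> near q (fun r => r != 0 /\ level r = level q /\ depth r = depth q).
Proof.
move=> q_neq0.
have near_level : near q (fun r => level r = level q).
  by apply: (near_first_above level_above q_neq0) => k; exists 1.
have near_depth : near q (fun r => depth r = depth q).
  apply: (near_first_above depth_above q_neq0) => k.
  by apply: (near_mono near_level) => r; rewrite /depth_coef => ->.
exact: nearI (near_neq0 q_neq0) (nearI near_level near_depth).
Qed.

Lemma level_large (m : nat) : near 0 (fun r => r != 0 -> (m < level r)%N).
Proof.
have m_gt0 : 0 < m.+1%:R :> rat by rewrite ltr0n.
exists (2 * m.+1%:R)^-1; split=> [|r]; first by rewrite invr_gt0 mulr_gt0.
rewrite subr0 -[_^-1]div1r ltr_pdivlMr ?mulr_gt0 // => small r_neq0.
apply: (first_above_ge level_above r_neq0) => j lt_jm.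
rewrite above_normE normrM ger0_norm // -leNgt.
have le_jm : j.+1%:R * `|r| <= m.+1%:R * `|r| by rewrite ler_wpM2r // ler_nat.
have jr_ge0 := mulr_ge0 (ler0n rat j.+1) (normr_ge0 r).
rewrite mulrC in small; nra.
Qed.

Lemma pell_solution (n : nat) :
  exists p q : nat, (p * p = 2 * (q * q) + 1 /\ n < q)%N.
Proof.
elim: n => [|n [p [q [pell lt_nq]]]]; first by exists 3%N, 2%N.
by exists (3 * p + 4 * q)%N, (2 * p + 3 * q)%N; split; nia.
Qed.

Section PellPoint.

Variables (m p q : nat).
Hypotheses (pell : (p * p = 2 * (q * q) + 1)%N) (lt_mq : (m < q)%N).

Let r : rat := p%:R / (2 * q * m.+1)%N%:R.

Let q_gt0 : (0 < q)%N := leq_ltn_trans (leq0n m) lt_mq.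

Let den_gt0 : (0 < 2 * q * m.+1)%N.
Proof. by rewrite !muln_gt0 q_gt0. Qed.

Lemma pell_point_neq0 : r != 0.
Proof.
have p_gt0 : (0 < p)%N by case: p pell => //; lia.
by apply: mulf_neq0; rewrite ?invr_eq0 pnatr_eq0 -lt0n.
Qed.

Lemma level_pell_point : level r = m.
Proof.
apply/eqP; rewrite eqn_leq; apply/andP; split.
  apply: first_above_le; rewrite /= mulrA -natrM above_ratio //; nia.
apply: (first_above_ge level_above pell_point_neq0) => j lt_jm.
rewrite /= mulrA -natrM above_ratio // -leqNgt.
have le_jm : (j.+1 * p * (j.+1 * p) <= m * m * (p * p))%N.
  by rewrite mulnACA leq_mul // leq_mul.
apply: (leq_trans (leq_mul (leqnn 2) le_jm)); rewrite pell; nia.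
Qed.

Lemma depth_pell_point (b : nat) : (b <= q)%N -> (b <= depth r)%N.
Proof.
move=> le_bq; apply: (first_above_ge depth_above pell_point_neq0) => k lt_kb.
have -> : depth_coef (level r) k * r = (k.+1 * p)%N%:R / (2 * q * k.+2)%N%:R.
  rewrite level_pell_point /depth_coef /r !natrM; field.
  by rewrite nat1r -(natrD _ 2) !pnatr_eq0 /= -lt0n q_gt0.
rewrite above_ratio ?muln_gt0 ?q_gt0 //; nia.
Qed.

Lemma norm_pell_point : `|r| <= m.+1%:R^-1.
Proof.
rewrite ger0_norm ?divr_ge0 ?ler0n // ler_pdivrMr ?ltr0n // natrM.
by rewrite [_ * m.+1%:R]mulrC mulKf ?pnatr_eq0 // ler_nat; nia.
Qed.

End PellPoint.

Lemma level_depth_witness (g : nat -> nat) (A : rat -> Prop) :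
  near 0 A -> exists r, [/\ A r, r != 0 & (g (level r) <= depth r)%N].
Proof.
move=> [e [e_gt0 Ae]].
have [m m_big] := exists_nat_gt e^-1.
have [p [q [pell lt_mgq]]] := pell_solution (m + g m).
have lt_mq : (m < q)%N by lia.
exists (p%:R / (2 * q * m.+1)%N%:R); split.
- apply: Ae; rewrite subr0 (le_lt_trans (norm_pell_point pell lt_mq)) //.
  rewrite -[e]invrK ltf_pV2 ?posrE ?invr_gt0 ?ltr0n //.
  by rewrite (lt_le_trans m_big) // ler_nat.
- exact: pell_point_neq0 pell lt_mq.
- by rewrite level_pell_point //; apply: depth_pell_point; lia.
Qed.

Local Close Scope ring_scope.

Section Omega1.

Variables (W : Type) (lt : W -> W -> Prop).
Hypothesis omega1 : is_omega1 lt.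

Lemma omega1_inhabited : inhabited W.
Proof.
have [_ [_ [_ [_ [uncountable _]]]]] := omega1.
apply: NNPP => empty; apply: uncountable; exists (fun _ => 0) => a.
by case: empty; exists.
Qed.

Lemma omega1_asym (a b : W) : lt a b -> ~ lt b a.
Proof. by have [irr [trans _]] := omega1; move=> ab /(trans _ _ _ ab); apply: irr. Qed.

Lemma omega1_segment_countable (a : W) :
  exists g : W -> nat, forall b c, ~ lt a b -> ~ lt a c -> g b = g c -> b = c.
Proof.
have [_ [_ [total [_ [_ segment]]]]] := omega1.
have [g0 g0_inj] := segment a.
have le_a b : ~ lt a b -> b = a \/ lt b a by case: (total a b) => [|[|]]; auto.
exists (fun b => if excluded_middle_informative (b = a) then 0 else (g0 b).+1).
move=> b c /le_a b_le /le_a c_le.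
case: excluded_middle_informative => [b_a|b_neq];
  case: excluded_middle_informative => [c_a|c_neq] //.
- by move=> _; rewrite b_a c_a.
- move=> /= [g_bc]; case: b_le c_le => [//|b_lt] [//|c_lt].
  exact: g0_inj b_lt c_lt g_bc.
Qed.

Lemma omega1_bounded (I : countType) (h : I -> W) : exists rho, forall i, lt (h i) rho.
Proof.
have [_ [_ [_ [_ [uncountable _]]]]] := omega1.
apply: NNPP => unbounded.
have [idx not_below] : exists idx : W -> I, forall rho, ~ lt (h (idx rho)) rho.
  apply: (choice (fun rho i => ~ lt (h i) rho)) => rho.
  apply: NNPP => all_below; apply: unbounded; exists rho => i.
  by apply: NNPP => not_lt; apply: all_below; exists i.
have [code code_inj] := choice _ omega1_segment_countable.
apply: uncountable; exists (fun rho => pickle (idx rho, code (h (idx rho)) rho)).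
move=> a b /(pcan_inj (@pickleK _)) [idx_ab code_ab].
apply: (code_inj (h (idx a))); first exact: not_below.
  by rewrite idx_ab; apply: not_below.
by rewrite code_ab idx_ab.
Qed.

Lemma omega1_list_bounded (w0 : W) (A : list W) : exists b, forall a, In a A -> lt a b.
Proof.
have [b below_b] := omega1_bounded (fun n : nat => List.nth n A w0).
by exists b => a /(In_nth _ _ w0) [n [_ <-]].
Qed.

End Omega1.

Lemma list_nat_bounded (I : list nat) : exists m, forall i, In i I -> i <= m.
Proof.
elim: I => [|a I [m le_m]]; first by exists 0.
exists (maxn a m) => i [<-|/le_m le_im]; first exact: leq_maxl.
exact: leq_trans le_im (leq_maxr _ _).
Qed.

Section NotSelective.

Variables (W : Type) (w0 : W) (lt : W -> W -> Prop) (f : W -> nat -> nat).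
Variable P : nat -> nat -> Prop.
Hypotheses (omega1 : is_omega1 lt) (partP : partition_infinite P).

Variables N K : rat -> nat.
Hypothesis near_NK :
  forall q, q != 0%R -> near q (fun r => r != 0%R /\ N r = N q /\ K r = K q).
Hypothesis N_large : forall m, near 0%R (fun r => r != 0%R -> m < N r).
Hypothesis NK_witness : forall (g : nat -> nat) (A : rat -> Prop),
  near 0%R A -> exists r, [/\ A r, r != 0%R & g (N r) <= K r].

Definition carrier (y : rat) (x : Xpt W) : Prop :=
  match x with
  | None => y = 0%R
  | Some (n, _) => [/\ y != 0%R, P (N y) n & K y < n]
  end.

Lemma carrier_nonempty (y : rat) : exists x, carrier y x.
Proof.
have [_ [_ P_inf]] := partP.
have [->|y_neq0] := eqVneq y 0%R; first by exists None.
by have [n [lt_n Pn]] := P_inf (N y) (K y).+1; exists (Some (n, w0)).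
Qed.

Lemma carrier_closed (y : rat) : is_closed (Xopen lt P f) (carrier y).
Proof.
move=> /= y_neq0; exists [:: N y], [::] => -[[n b]|] //= off_PNy _ [_ Pn _].
by apply: off_PNy Pn; left.
Qed.

Lemma carrier_lsc : lower_semicontinuous Qopen (Xopen lt P f) carrier.
Proof.
have [_ [P_disj P_inf]] := partP.
move=> U U_open q [x [qx Ux]].
move: qx Ux; have [->|q_neq0] := eqVneq q 0%R.
- case: x => [[n b] []|_ U_inf]; first by rewrite eqxx.
  have [I [A U_basic]] := U_open U_inf.
  have [m I_le_m] := list_nat_bounded I.
  have [b A_lt_b] := omega1_list_bounded omega1 w0 A.
  apply: (near_mono (N_large m)) => r m_lt_Nr.
  have [->|r_neq0] := eqVneq r 0%R; first by exists None.
  have [n [lt_Kn Pn]] := P_inf (N r) (K r).+1.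
  exists (Some (n, b)); split=> //.
  apply: U_basic => [i /I_le_m le_im /= Pin | a /A_lt_b lt_ab /= [_]].
    by have := P_disj _ _ _ Pin Pn; have := m_lt_Nr r_neq0; lia.
  exact: omega1_asym.
- move=> qx Ux; apply: (near_mono (near_NK q_neq0)) => r [r_neq0 [Nr Kr]].
  exists x; split=> //.
  case: x qx {Ux} => [[n b]|] /=; first by rewrite Nr Kr; case.
  by move=> /eqP; rewrite (negbTE q_neq0).
Qed.

Lemma no_continuous_carrier_selection (s : rat -> Xpt W) :
  is_continuous Qopen (Xopen lt P f) s -> ~ (forall y, carrier y (s y)).
Proof.
move=> s_cont s_sel.
have s0 : s 0%R = None by move: (s_sel 0%R); case: (s 0%R) => // -[n b] []; rewrite eqxx.
pose ordinal_of (y : rat) := if s y is Some (_, b) then b else w0.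
have [rho below_rho] := omega1_bounded omega1 ordinal_of.
have Zrho_open : Xopen lt P f (subZ lt P f rho).
  by move=> _; exists [::], [:: rho] => x _; apply; left.
have near0_Zrho : near 0%R (fun r => subZ lt P f rho (s r)).
  by apply: (s_cont _ Zrho_open); rewrite s0.
have [r [Zr r_neq0 le_fK]] := NK_witness (f rho) near0_Zrho.
move: (s_sel r) Zr (below_rho r); rewrite /ordinal_of.
case: (s r) => [[n b]|] /=; last by move=> /eqP; rewrite (negbTE r_neq0).
move=> [_ Pn lt_Kn] notZ lt_b.
by apply: notZ; split=> //; exists (N r); split=> //; apply: leq_ltn_trans le_fK lt_Kn.
Qed.

Lemma not_Q_selective : ~ selective Qopen (Xopen lt P f).
Proof.
move=> selectable.
have [s [s_cont s_sel]] := selectable carrier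
  (fun y => conj (carrier_nonempty y) (carrier_closed (y := y))) carrier_lsc.
exact: no_continuous_carrier_selection s_cont s_sel.
Qed.

End NotSelective.

Theorem mainTheorem4 (W : Type) (lt : W -> W -> Prop) (f : W -> nat -> nat)
  (P : nat -> nat -> Prop) :
  is_omega1 lt ->
  (forall a b, lt a b -> lt_star (f a) (f b)) ->
  (forall g : nat -> nat, exists a, lt_star g (f a)) ->
  partition_infinite P ->
  ~ selective Qopen (Xopen lt P f).
Proof.
move=> omega1 _ _ partP; have [w0] := omega1_inhabited omega1.
exact: (not_Q_selective w0 omega1 partP (N := level) (K := depth)
          near_level_depth level_large level_depth_witness).
Qed.
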